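(* Let $u>0$, $\Delta x>0$, and let $\varphi:\mathbb R\to\mathbb R$ satisfy $0\le\varphi(r)\le 1$ for all $r$ (for instance the Minmod limiter $\varphi(r)=\mathrm{minmod}(1,r)$). Let $t\mapsto c(t)=(c_j(t))_{j\in\mathbb Z}$ be a $C^1$ map from an interval $I\subset\mathbb R$ into $\ell^2(\mathbb Z)$ satisfying, for all $t\in I$ and $j\in\mathbb Z$, $$\frac{d}{dt}c_j(t)+u\,\frac{c_{j+\frac12}(t)-c_{j-\frac12}(t)}{\Delta x}=0,\qquad c_{j+\frac12}=c_j+\tfrac12(c_{j+1}-c_j)\,\varphi_{j+\frac12},$$ where $\varphi_{j+\frac12}=\varphi\!\left(\frac{c_j-c_{j-1}}{c_{j+1}-c_j}\right)$ if $c_{j+1}\ne c_j$ and $\varphi_{j+\frac12}$ is an arbitrary number in $[0,1]$ if $c_{j+1}=c_j$. Then for all $t\in I$, $$\frac{\Delta x}{2}\frac{d}{dt}\sum_{j\in\mathbb Z}|c_j(t)|^2=-\frac u2\sum_{j\in\mathbb Z}|c_j(t)-c_{j-1}(t)|^2\bigl(1-\varphi_{j-\frac12}(t)\bigr)\le 0 ,$$ so in particular $t\mapsto\sum_j|c_j(t)|^2$ is non-increasing.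
   Context: The function $\mathrm{minmod}:\mathbb R^2\to\mathbb R$ is defined by $\mathrm{minmod}(a,b)=0$ if $ab\le 0$, $\mathrm{minmod}(a,b)=\min(a,b)$ if $a,b>0$, and $\mathrm{minmod}(a,b)=\max(a,b)$ if $a,b<0$. *)

From Stdlib Require Import Reals ZArith.
Open Scope R_scope.

(* minmod, as in the paper (for reference; the theorem is about any limiter
   phi with values in [0,1], e.g. phi r = minmod 1 r). *)
Definition minmod (a b : R) : R :=
  if Rle_dec (a * b) 0 then 0
  else if Rlt_dec 0 a then Rmin a b else Rmax a b.

Definition is_interval (I : R -> Prop) : Prop :=
  forall a b x, I a -> I b -> a <= x <= b -> I x.

Definition sum_Z (f : Z -> R) (s : R) : Prop :=
  exists a b : R,
    infinite_sum (fun n : nat => f (Z.of_nat n)) a /\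
    infinite_sum (fun n : nat => f (- Z.of_nat (S n))%Z) b /\
    s = a + b.

Definition in_l2 (x : Z -> R) : Prop :=
  exists S, sum_Z (fun j => (x j) ^ 2) S.

Definition l2_close (x y : Z -> R) (eps : R) : Prop :=
  exists S, sum_Z (fun j => (x j - y j) ^ 2) S /\ S < eps ^ 2.

Definition C1_l2_on (I : R -> Prop) (c dc : R -> Z -> R) : Prop :=
  (forall t, I t -> in_l2 (c t) /\ in_l2 (dc t)) /\
  (forall t, I t -> forall eps, 0 < eps -> exists delta, 0 < delta /\
     forall s, I s -> s <> t -> Rabs (s - t) < delta ->
       l2_close (fun j => (c s j - c t j) / (s - t)) (dc t) eps) /\
  (forall t, I t -> forall eps, 0 < eps -> exists delta, 0 < delta /\
     forall s, I s -> Rabs (s - t) < delta -> l2_close (dc s) (dc t) eps).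

(* the reconstructed interface value c_{j+1/2}, with ph j = phi_{j+1/2} *)
Definition c_half (c : Z -> R) (ph : Z -> R) (j : Z) : R :=
  c j + / 2 * (c (j + 1)%Z - c j) * ph j.

Definition limiter_values (phi : R -> R) (c : Z -> R) (ph : Z -> R) : Prop :=
  forall j : Z,
    (c (j + 1)%Z <> c j ->
       ph j = phi ((c j - c (j - 1)%Z) / (c (j + 1)%Z - c j))) /\
    (c (j + 1)%Z = c j -> 0 <= ph j <= 1).

(* Multiplying the scheme by c_j and writing F_j = c_j c_{j+1/2} - c_j^2 / 2 gives
     c_j (c_{j+1/2} - c_{j-1/2}) = F_j - F_{j-1} + (c_j - c_{j-1})^2 (1 - phi_{j-1/2}) / 2.
   Since 0 <= phi <= 1, |F_j| <= 2 c_j^2 + c_{j+1}^2, so F vanishes at infinity for c in l^2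
   and the differences telescope to 0. Hence sum_j c_j c_j' = -(u / (2 dx)) D, and the left-hand
   side is half the derivative of sum_j c_j^2 because c is differentiable in l^2. A function
   whose difference quotients are eventually below every eps > 0 is nonincreasing on an
   interval, which gives the monotonicity. *)

From Stdlib Require Import Reals ZArith Lra Lia Classical.
From Coquelicot Require Import Coquelicot.
Open Scope R_scope.

Lemma infinite_sum_plus a b la lb :
  infinite_sum a la -> infinite_sum b lb -> infinite_sum (fun n => a n + b n) (la + lb).
Proof. rewrite <- !is_series_Reals; apply (is_series_plus a b). Qed.

Lemma infinite_sum_scal k a l :
  infinite_sum a l -> infinite_sum (fun n => k * a n) (k * l).
Proof. rewrite <- !is_series_Reals; apply (is_series_scal k a). Qed.

Lemma infinite_sum_ext a b l :
  (forall n, a n = b n) -> infinite_sum a l -> infinite_sum b l.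
Proof. rewrite <- !is_series_Reals; apply (is_series_ext a b). Qed.

Lemma infinite_sum_le a b la lb :
  (forall n, a n <= b n) -> infinite_sum a la -> infinite_sum b lb -> la <= lb.
Proof. intros Hab; apply Rle_cv_lim; intros n; apply sum_Rle; auto. Qed.

Lemma infinite_sum_nonneg a l : (forall n, 0 <= a n) -> infinite_sum a l -> 0 <= l.
Proof. intros Ha Hl; apply Rle_trans with (sum_f_R0 a 0); [apply Ha| apply sum_incr; auto]. Qed.

Lemma infinite_sum_dominated a b lb :
  (forall n, Rabs (a n) <= b n) -> infinite_sum b lb -> exists la, infinite_sum a la.
Proof.
  intros Hab Hb; apply is_series_Reals in Hb.
  destruct (ex_series_le a b Hab (ex_intro _ lb Hb)) as [la Ha].
  exists la; apply is_series_Reals, Ha.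
Qed.

Lemma infinite_sum_terms_cv_0 a l : infinite_sum a l -> Un_cv a 0.
Proof. intros Ha; apply is_lim_seq_Reals, ex_series_lim_0; exists l; apply is_series_Reals, Ha. Qed.

Definition Zseries (f : Z -> R) : R :=
  Series (fun n => f (Z.of_nat n)) + Series (fun n => f (- Z.of_nat (S n))%Z).

Lemma sum_Z_Zseries f s : sum_Z f s -> s = Zseries f.
Proof.
  intros [a [b [Ha [Hb ->]]]]; unfold Zseries.
  apply is_series_Reals, is_series_unique in Ha, Hb.
  now rewrite Ha, Hb.
Qed.

Lemma sum_Z_unique f s1 s2 : sum_Z f s1 -> sum_Z f s2 -> s1 = s2.
Proof. intros H1 H2; now rewrite (sum_Z_Zseries _ _ H1), (sum_Z_Zseries _ _ H2). Qed.

Lemma sum_Z_plus f g a b :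
  sum_Z f a -> sum_Z g b -> sum_Z (fun j => f j + g j) (a + b).
Proof.
  intros [a1 [a2 [Ha1 [Ha2 ->]]]] [b1 [b2 [Hb1 [Hb2 ->]]]].
  exists (a1 + b1), (a2 + b2); repeat split; [apply infinite_sum_plus..| ring]; auto.
Qed.

Lemma sum_Z_scal k f a : sum_Z f a -> sum_Z (fun j => k * f j) (k * a).
Proof.
  intros [a1 [a2 [Ha1 [Ha2 ->]]]].
  exists (k * a1), (k * a2); repeat split; [apply infinite_sum_scal..| ring]; auto.
Qed.

Lemma sum_Z_ext f g a : (forall j, f j = g j) -> sum_Z f a -> sum_Z g a.
Proof.
  intros Hfg [a1 [a2 [Ha1 [Ha2 ->]]]].
  exists a1, a2; repeat split; eapply infinite_sum_ext; eauto; intros; apply Hfg.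
Qed.

Lemma sum_Z_le f g a b : (forall j, f j <= g j) -> sum_Z f a -> sum_Z g b -> a <= b.
Proof.
  intros Hfg [a1 [a2 [Ha1 [Ha2 ->]]]] [b1 [b2 [Hb1 [Hb2 ->]]]].
  apply Rplus_le_compat; eapply infinite_sum_le; eauto; intros; apply Hfg.
Qed.

Lemma sum_Z_nonneg f a : (forall j, 0 <= f j) -> sum_Z f a -> 0 <= a.
Proof.
  intros Hf [a1 [a2 [Ha1 [Ha2 ->]]]].
  apply Rplus_le_le_0_compat; eapply infinite_sum_nonneg; eauto; intros; apply Hf.
Qed.

Lemma sum_Z_dominated f g b :
  (forall j, Rabs (f j) <= g j) -> sum_Z g b -> exists a, sum_Z f a.
Proof.
  intros Hfg [b1 [b2 [Hb1 [Hb2 _]]]].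
  destruct (infinite_sum_dominated (fun n => f (Z.of_nat n)) _ _ (fun n => Hfg _) Hb1)
    as [a1 Ha1].
  destruct (infinite_sum_dominated (fun n => f (- Z.of_nat (S n))%Z) _ _ (fun n => Hfg _) Hb2)
    as [a2 Ha2].
  exists (a1 + a2), a1, a2; auto.
Qed.

Definition vanishes_at_infinity (f : Z -> R) : Prop :=
  forall eps, 0 < eps -> exists N : nat, forall n, (N <= n)%nat ->
    Rabs (f (Z.of_nat n)) < eps /\ Rabs (f (- Z.of_nat (S n))%Z) < eps.

Lemma sum_Z_vanishes f a : sum_Z f a -> vanishes_at_infinity f.
Proof.
  intros [a1 [a2 [Ha1 [Ha2 _]]]] eps Heps.
  destruct (infinite_sum_terms_cv_0 _ _ Ha1 eps Heps) as [N1 HN1].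
  destruct (infinite_sum_terms_cv_0 _ _ Ha2 eps Heps) as [N2 HN2].
  exists (Nat.max N1 N2); intros n Hn.
  specialize (HN1 n ltac:(lia)); specialize (HN2 n ltac:(lia)).
  unfold R_dist in *; rewrite Rminus_0_r in *; auto.
Qed.

Lemma vanishes_shift f : vanishes_at_infinity f -> vanishes_at_infinity (fun j => f (j + 1)%Z).
Proof.
  intros Hf eps Heps; destruct (Hf eps Heps) as [N HN].
  exists (S N); intros [|n] Hn; [lia|]; split.
  - replace (Z.of_nat (S n) + 1)%Z with (Z.of_nat (S (S n))) by lia; apply HN; lia.
  - replace (- Z.of_nat (S (S n)) + 1)%Z with (- Z.of_nat (S n))%Z by lia; apply HN; lia.
Qed.

Lemma vanishes_dominated f g h :
  vanishes_at_infinity f -> vanishes_at_infinity g ->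
  (forall j, Rabs (h j) <= Rabs (f j) + Rabs (g j)) -> vanishes_at_infinity h.
Proof.
  intros Hf Hg Hh eps Heps.
  destruct (Hf (eps / 2) ltac:(lra)) as [N1 HN1].
  destruct (Hg (eps / 2) ltac:(lra)) as [N2 HN2].
  exists (Nat.max N1 N2); intros n Hn.
  destruct (HN1 n ltac:(lia)), (HN2 n ltac:(lia)).
  pose proof (Hh (Z.of_nat n)); pose proof (Hh (- Z.of_nat (S n))%Z); split; lra.
Qed.

Lemma sum_Z_telescoping T : vanishes_at_infinity T -> sum_Z (fun j => T j - T (j - 1)%Z) 0.
Proof.
  intros HT; exists (- T (-1)%Z), (T (-1)%Z); repeat split; [| |ring];
    intros eps Heps; destruct (HT eps Heps) as [N HN]; exists N; intros n Hn;
    unfold R_dist.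
  - assert (Hpartial : forall m, sum_f_R0 (fun k => T (Z.of_nat k) - T (Z.of_nat k - 1)%Z) m
                              = T (Z.of_nat m) - T (-1)%Z).
    { induction m as [|m IH]; [reflexivity|].
      rewrite tech5, IH; replace (Z.of_nat (S m) - 1)%Z with (Z.of_nat m) by lia; ring. }
    rewrite Hpartial; replace (_ - _ - _) with (T (Z.of_nat n)) by ring; apply HN; lia.
  - assert (Hpartial : forall m,
      sum_f_R0 (fun k => T (- Z.of_nat (S k))%Z - T (- Z.of_nat (S k) - 1)%Z) m
      = T (-1)%Z - T (- Z.of_nat (S (S m)))%Z).
    { induction m as [|m IH]; [reflexivity|].
      rewrite tech5, IH.
      replace (- Z.of_nat (S (S m)) - 1)%Z with (- Z.of_nat (S (S (S m))))%Z by lia; ring. }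
    rewrite Hpartial; replace (_ - _ - _) with (- T (- Z.of_nat (S (S n)))%Z) by ring.
    rewrite Rabs_Ropp; apply HN; lia.
Qed.

Lemma Rabs_mult_le_weighted k a b : 0 < k -> Rabs (a * b) <= / 2 * (k * a ^ 2 + b ^ 2 / k).
Proof.
  intros Hk.
  assert (Hm : / 2 * (k * a ^ 2 + b ^ 2 / k) - a * b = / 2 * ((k * a - b) ^ 2 / k))
    by (field; lra).
  assert (Hp : / 2 * (k * a ^ 2 + b ^ 2 / k) + a * b = / 2 * ((k * a + b) ^ 2 / k))
    by (field; lra).
  assert (0 <= (k * a - b) ^ 2 / k) by (apply Rdiv_le_0_compat; [apply pow2_ge_0|lra]).
  assert (0 <= (k * a + b) ^ 2 / k) by (apply Rdiv_le_0_compat; [apply pow2_ge_0|lra]).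
  apply Rabs_le; lra.
Qed.

Lemma sum_Z_weighted_sq k f g A B : 0 < k ->
  sum_Z (fun j => f j ^ 2) A -> sum_Z (fun j => g j ^ 2) B ->
  sum_Z (fun j => / 2 * (k * f j ^ 2 + g j ^ 2 / k)) (/ 2 * (k * A + B / k)).
Proof.
  intros Hk HA HB; apply sum_Z_scal, sum_Z_plus; [apply sum_Z_scal, HA|].
  apply (sum_Z_ext (fun j => / k * g j ^ 2)); [intros; field; lra|].
  replace (B / k) with (/ k * B) by (field; lra); apply sum_Z_scal, HB.
Qed.

Lemma sum_Z_mult_exists f g A B :
  sum_Z (fun j => f j ^ 2) A -> sum_Z (fun j => g j ^ 2) B ->
  exists S, sum_Z (fun j => f j * g j) S.
Proof.
  intros HA HB; eapply sum_Z_dominated; [|exact (sum_Z_weighted_sq 1 f g A B Rlt_0_1 HA HB)].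
  intros j; apply Rabs_mult_le_weighted, Rlt_0_1.
Qed.

Lemma sum_Z_mult_abs_le k f g A B S : 0 < k ->
  sum_Z (fun j => f j ^ 2) A -> sum_Z (fun j => g j ^ 2) B ->
  sum_Z (fun j => f j * g j) S -> Rabs S <= / 2 * (k * A + B / k).
Proof.
  intros Hk HA HB HS; pose proof (sum_Z_weighted_sq k f g A B Hk HA HB) as Hw.
  assert (Hpt : forall j, Rabs (f j * g j) <= / 2 * (k * f j ^ 2 + g j ^ 2 / k))
    by (intros; apply Rabs_mult_le_weighted, Hk).
  assert (Hneg : forall j, -1 * (f j * g j) <= / 2 * (k * f j ^ 2 + g j ^ 2 / k)).
  { intros j; pose proof (Rle_abs (- (f j * g j))) as Habs.
    rewrite Rabs_Ropp in Habs; pose proof (Hpt j); lra. }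
  apply Rabs_le; split.
  - cut (-1 * S <= / 2 * (k * A + B / k)); [lra|].
    exact (sum_Z_le _ _ _ _ Hneg (sum_Z_scal (-1) _ _ HS) Hw).
  - exact (sum_Z_le _ _ _ _ (fun j => Rle_trans _ _ _ (Rle_abs _) (Hpt j)) HS Hw).
Qed.

Lemma sum_Z_sq_plus f g A B :
  sum_Z (fun j => f j ^ 2) A -> sum_Z (fun j => g j ^ 2) B ->
  exists S, sum_Z (fun j => (f j + g j) ^ 2) S /\ 0 <= S <= 2 * A + 2 * B.
Proof.
  intros HA HB.
  assert (H2 := sum_Z_plus _ _ _ _ (sum_Z_scal 2 _ _ HA) (sum_Z_scal 2 _ _ HB)).
  assert (Hpt : forall j, (f j + g j) ^ 2 <= 2 * f j ^ 2 + 2 * g j ^ 2)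
    by (intros j; pose proof (pow2_ge_0 (f j - g j)); nra).
  destruct (sum_Z_dominated (fun j => (f j + g j) ^ 2) _ _
    (fun j => ltac:(rewrite Rabs_pos_eq by apply pow2_ge_0; apply Hpt)) H2) as [S HS].
  exists S; repeat split; [exact HS| |].
  - exact (sum_Z_nonneg _ _ (fun j => pow2_ge_0 _) HS).
  - exact (sum_Z_le _ _ _ _ Hpt HS H2).
Qed.

Lemma sum_Z_sq_quotient_error (x y d : Z -> R) h k Ex Ey Sd Se Sxd :
  h <> 0 -> 0 < k ->
  sum_Z (fun j => x j ^ 2) Ex -> sum_Z (fun j => y j ^ 2) Ey ->
  sum_Z (fun j => d j ^ 2) Sd -> sum_Z (fun j => x j * d j) Sxd ->
  sum_Z (fun j => ((y j - x j) / h - d j) ^ 2) Se ->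
  Rabs ((Ey - Ex) / h - 2 * Sxd) <= k * Ex + Se / k + Rabs h * (2 * Sd + 2 * Se).
Proof.
  intros Hh Hk HEx HEy HSd HSxd HSe.
  set (e := fun j => (y j - x j) / h - d j) in HSe.
  destruct (sum_Z_mult_exists _ _ _ _ HEx HSe) as [Sxe HSxe].
  destruct (sum_Z_sq_plus _ _ _ _ HSd HSe) as [Sq [HSq HSq_bound]].
  assert (HEy' : sum_Z (fun j => y j ^ 2) (Ex + 2 * h * Sxd + 2 * h * Sxe + h ^ 2 * Sq)).
  { refine (sum_Z_ext _ _ _ _ (sum_Z_plus _ _ _ _ (sum_Z_plus _ _ _ _
      (sum_Z_plus _ _ _ _ HEx (sum_Z_scal (2 * h) _ _ HSxd))
      (sum_Z_scal (2 * h) _ _ HSxe)) (sum_Z_scal (h ^ 2) _ _ HSq))).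
    intros j; unfold e; field; exact Hh. }
  rewrite (sum_Z_unique _ _ _ HEy HEy').
  replace ((_ - Ex) / h - 2 * Sxd) with (2 * Sxe + h * Sq) by (field; exact Hh).
  pose proof (sum_Z_mult_abs_le k _ _ _ _ _ Hk HEx HSe HSxe) as HSxe_bound.
  eapply Rle_trans; [apply Rabs_triang|].
  rewrite Rabs_mult, Rabs_mult, (Rabs_pos_eq 2), (Rabs_pos_eq Sq) by lra.
  pose proof (Rabs_pos h); nra.
Qed.

Lemma sum_Z_sq_derivative (I : R -> Prop) (c dc : R -> Z -> R) t Et Sd Scd :
  sum_Z (fun j => c t j ^ 2) Et -> sum_Z (fun j => dc t j ^ 2) Sd ->
  sum_Z (fun j => c t j * dc t j) Scd ->
  (forall eps, 0 < eps -> exists delta, 0 < delta /\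
     forall s, I s -> s <> t -> Rabs (s - t) < delta ->
       l2_close (fun j => (c s j - c t j) / (s - t)) (dc t) eps) ->
  forall eps, 0 < eps -> exists delta, 0 < delta /\
    forall s, I s -> s <> t -> Rabs (s - t) < delta ->
    forall Es, sum_Z (fun j => c s j ^ 2) Es ->
      Rabs ((Es - Et) / (s - t) - 2 * Scd) < eps.
Proof.
  intros HEt HSd HScd Hfrechet eps Heps.
  (* Spend eps/4 on each of k Et and Se / k, and eps/2 on |s - t| (2 Sd + 2 Se). *)
  pose proof (sum_Z_nonneg _ _ (fun j => pow2_ge_0 _) HEt) as HEt0.
  pose proof (sum_Z_nonneg _ _ (fun j => pow2_ge_0 _) HSd) as HSd0.
  set (k := eps / (4 * (Et + 1))).
  assert (Hk : 0 < k) by (apply Rdiv_lt_0_compat; lra).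
  assert (HkEt : k * Et < eps / 4).
  { unfold k; apply (Rmult_lt_reg_r (4 * (Et + 1))); [lra|].
    field_simplify; [nra|lra]. }
  set (eps1 := Rmin 1 (k * eps / 4)).
  assert (Heps1 : 0 < eps1) by (apply Rmin_glb_lt; [lra|]; apply Rdiv_lt_0_compat; nra).
  destruct (Hfrechet eps1 Heps1) as [delta0 [Hdelta0 Hclose]].
  set (delta := Rmin delta0 (eps / (4 * (Sd + 1)))).
  exists delta; split; [apply Rmin_glb_lt; [lra|apply Rdiv_lt_0_compat; lra]|].
  intros s Is Hst Hs Es HEs.
  destruct (Hclose s Is Hst (Rlt_le_trans _ _ _ Hs (Rmin_l _ _))) as [Se [HSe HSe_small]].
  pose proof (sum_Z_nonneg _ _ (fun j => pow2_ge_0 _) HSe) as HSe0.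
  assert (Hst' : s - t <> 0) by lra.
  pose proof (sum_Z_sq_quotient_error _ _ _ _ _ _ _ _ _ _ Hst' Hk HEt HEs HSd HScd HSe)
    as Herr.
  assert (Heps1_1 : eps1 <= 1) by apply Rmin_l.
  assert (Heps1_k : eps1 <= k * eps / 4) by apply Rmin_r.
  assert (HSe_k : Se / k < eps / 4).
  { apply (Rmult_lt_reg_r k); [exact Hk|]. field_simplify; [nra|lra]. }
  assert (Hdrift : Rabs (s - t) * (2 * Sd + 2 * Se) < eps / 2).
  { assert (Hs' : Rabs (s - t) < eps / (4 * (Sd + 1))) by
      (eapply Rlt_le_trans; [exact Hs| apply Rmin_r]).
    assert (HSe1 : Se < 1) by nra.
    assert (Hhalf : eps / (4 * (Sd + 1)) * (2 * (Sd + 1)) = eps / 2) by (field; lra).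
    pose proof (Rabs_pos (s - t)); nra. }
  lra.
Qed.

Section Nonincreasing_on_interval.

Variables (I : R -> Prop) (E : R -> R).
Hypothesis HI : is_interval I.
Hypothesis slope_lt : forall t, I t -> forall eps, 0 < eps -> exists delta, 0 < delta /\
  forall s, I s -> s <> t -> Rabs (s - t) < delta -> (E s - E t) / (s - t) < eps.

(* Continuous induction: the supremum of the points up to which the bound holds is b. *)
Lemma increment_le_slope a b eps : I a -> I b -> a <= b -> 0 < eps ->
  E b - E a <= eps * (b - a).
Proof.
  intros Ia Ib Hab Heps.
  set (A := fun x => a <= x <= b /\ E x - E a <= eps * (x - a)).
  assert (Aa : A a) by (split; lra).
  destruct (completeness A) as [m [Hub Hlub]];
    [exists b; intros x [Hx _]; lra | now exists a |].
  assert (Ham : a <= m) by now apply Hub.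
  assert (Hmb : m <= b) by (apply Hlub; intros x [Hx _]; lra).
  assert (Im : I m) by now apply (HI a b).
  destruct (slope_lt m Im eps Heps) as [delta [Hdelta Hslope]].
  assert (Am : A m).
  { split; [lra|]. destruct (Req_dec m a) as [Hma|Hma]; [subst m; lra|].
    assert (Hnear : exists x, A x /\ m - delta < x).
    { apply NNPP; intros Hno.
      enough (m <= m - delta) by lra.
      apply Hlub; intros x Ax; apply Rnot_lt_le; intros Hx; apply Hno; now exists x. }
    destruct Hnear as [x [[Hx Hxa] Hxm]].
    assert (Hxm' : x <= m) by (apply Hub; now split).
    destruct (Req_dec x m) as [<-|Hxm'']; [exact Hxa|].
    assert (Ix : I x) by (apply (HI a b); auto; lra).
    pose proof (Hslope x Ix Hxm'' ltac:(rewrite Rabs_left; lra)) as Hq.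
    set (q := (E x - E m) / (x - m)) in Hq.
    assert (E x - E m = q * (x - m)) by (unfold q; field; lra).
    nra. }
  assert (Hm_end : m = b).
  { destruct (Req_dec m b) as [|Hne]; [assumption|exfalso].
    set (s := m + Rmin delta (b - m) / 2).
    assert (Hpos : 0 < Rmin delta (b - m)) by (apply Rmin_glb_lt; lra).
    pose proof (Rmin_l delta (b - m)); pose proof (Rmin_r delta (b - m)).
    assert (Is : I s) by (apply (HI a b); auto; unfold s; lra).
    pose proof (Hslope s Is ltac:(unfold s; lra) ltac:(rewrite Rabs_right; unfold s; lra))
      as Hq.
    set (q := (E s - E m) / (s - m)) in Hq.
    assert (E s - E m = q * (s - m)) by (unfold q; field; unfold s; lra).
    assert (q * (s - m) <= eps * (s - m)) by (apply Rmult_le_compat_r; unfold s; lra).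
    assert (s <= m) by (apply Hub; split; [unfold s; lra| destruct Am; lra]).
    unfold s in *; lra. }
  subst m; apply Am.
Qed.

Lemma nonincreasing_on_interval a b : I a -> I b -> a <= b -> E b <= E a.
Proof.
  intros Ia Ib Hab; apply Rnot_lt_le; intros Hlt.
  destruct (Req_dec a b) as [<-|Hne]; [lra|].
  pose proof (increment_le_slope a b ((E b - E a) / (2 * (b - a))) Ia Ib Hab
    ltac:(apply Rdiv_lt_0_compat; lra)) as Hinc.
  replace ((E b - E a) / (2 * (b - a)) * (b - a)) with ((E b - E a) / 2) in Hinc
    by (field; lra).
  lra.
Qed.

End Nonincreasing_on_interval.

Definition energy_flux (c ph : Z -> R) (j : Z) : R := c j * c_half c ph j - / 2 * c j ^ 2.

Lemma energy_flux_balance c ph j :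
  c j * (c_half c ph j - c_half c ph (j - 1)%Z) =
  energy_flux c ph j - energy_flux c ph (j - 1)%Z
  + / 2 * (c j - c (j - 1)%Z) ^ 2 * (1 - ph (j - 1)%Z).
Proof. unfold energy_flux, c_half; replace (j - 1 + 1)%Z with j by lia; field. Qed.

Lemma energy_flux_abs_le c ph j : 0 <= ph j <= 1 ->
  Rabs (energy_flux c ph j) <= Rabs (2 * c j ^ 2) + Rabs (c (j + 1)%Z ^ 2).
Proof.
  intros Hph; unfold energy_flux, c_half.
  rewrite (Rabs_pos_eq (2 * _)), (Rabs_pos_eq (_ ^ 2)) by nra.
  assert (0 <= ph j * (c j - c (j + 1)%Z) ^ 2) by (apply Rmult_le_pos; [lra|apply pow2_ge_0]).
  assert (0 <= ph j * (c j + c (j + 1)%Z) ^ 2) by (apply Rmult_le_pos; [lra|apply pow2_ge_0]).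
  apply Rabs_le; split; nra.
Qed.

Lemma energy_flux_vanishes c ph E : (forall j, 0 <= ph j <= 1) ->
  sum_Z (fun j => c j ^ 2) E -> vanishes_at_infinity (energy_flux c ph).
Proof.
  intros Hph HE.
  apply (vanishes_dominated (fun j => 2 * c j ^ 2) (fun j => c (j + 1)%Z ^ 2)).
  - exact (sum_Z_vanishes _ _ (sum_Z_scal 2 _ _ HE)).
  - exact (vanishes_shift (fun j => c j ^ 2) (sum_Z_vanishes _ _ HE)).
  - intros j; apply energy_flux_abs_le, Hph.
Qed.

Lemma limiter_values_bounds phi c ph : (forall r, 0 <= phi r <= 1) ->
  limiter_values phi c ph -> forall j, 0 <= ph j <= 1.
Proof.
  intros Hphi Hlim j; destruct (Hlim j) as [Hjump Hflat].
  destruct (Req_dec (c (j + 1)%Z) (c j)) as [Heq|Hne]; [now apply Hflat|].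
  rewrite Hjump by exact Hne; apply Hphi.
Qed.

Lemma dissipation_sum u dx (c dc ph : Z -> R) E Scd :
  0 < u -> 0 < dx -> (forall j, 0 <= ph j <= 1) ->
  sum_Z (fun j => c j ^ 2) E -> sum_Z (fun j => c j * dc j) Scd ->
  (forall j, dc j + u * (c_half c ph j - c_half c ph (j - 1)%Z) / dx = 0) ->
  sum_Z (fun j => (c j - c (j - 1)%Z) ^ 2 * (1 - ph (j - 1)%Z)) (- (2 * dx / u) * Scd).
Proof.
  intros Hu Hdx Hph HE HScd Hscheme.
  replace (- (2 * dx / u) * Scd) with (- (2 * dx / u) * Scd + -2 * 0) by ring.
  apply (sum_Z_ext (fun j => - (2 * dx / u) * (c j * dc j)
    + -2 * (energy_flux c ph j - energy_flux c ph (j - 1)%Z))).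
  - intros j; set (X := c_half c ph j - c_half c ph (j - 1)%Z).
    assert (Hdc : dc j = - (u * X / dx)) by (specialize (Hscheme j); fold X in Hscheme; lra).
    rewrite Hdc; replace (- (2 * dx / u) * (c j * - (u * X / dx))) with (2 * (c j * X))
      by (field; lra).
    unfold X; rewrite energy_flux_balance; field.
  - apply sum_Z_plus, sum_Z_scal; [apply sum_Z_scal, HScd|].
    exact (sum_Z_telescoping _ (energy_flux_vanishes c ph E Hph HE)).
Qed.

Section Limited_scheme.

Variables (u dx : R) (phi : R -> R) (I : R -> Prop) (c dc : R -> Z -> R) (ph : R -> Z -> R).
Hypotheses (Hu : 0 < u) (Hdx : 0 < dx) (Hphi : forall r, 0 <= phi r <= 1).
Hypothesis Hc : C1_l2_on I c dc.
Hypothesis Hlim : forall t, I t -> limiter_values phi (c t) (ph t).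
Hypothesis Hode : forall t, I t -> forall j : Z,
  dc t j + u * (c_half (c t) (ph t) j - c_half (c t) (ph t) (j - 1)%Z) / dx = 0.

Lemma energy_dissipation_rate t : I t ->
  exists D : R,
    sum_Z (fun j => (c t j - c t (j - 1)%Z) ^ 2 * (1 - ph t (j - 1)%Z)) D /\
    (forall eps, 0 < eps -> exists delta, 0 < delta /\
       forall s, I s -> s <> t -> Rabs (s - t) < delta ->
       forall Es Et,
         sum_Z (fun j => (c s j) ^ 2) Es -> sum_Z (fun j => (c t j) ^ 2) Et ->
         Rabs (dx / 2 * ((Es - Et) / (s - t)) - (- (u / 2) * D)) < eps) /\
    - (u / 2) * D <= 0.
Proof.
  intros It; destruct Hc as [Hl2 [Hfrechet _]].
  destruct (Hl2 t It) as [[Et HEt] [Sd HSd]].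
  destruct (sum_Z_mult_exists _ _ _ _ HEt HSd) as [Scd HScd].
  pose proof (limiter_values_bounds _ _ _ Hphi (Hlim t It)) as Hph.
  pose proof (dissipation_sum _ _ _ _ _ _ _ Hu Hdx Hph HEt HScd (Hode t It)) as HD.
  exists (- (2 * dx / u) * Scd); split; [exact HD|split].
  - intros eps Heps.
    destruct (sum_Z_sq_derivative I c dc t Et Sd Scd HEt HSd HScd (Hfrechet t It)
      (2 * eps / dx) ltac:(apply Rdiv_lt_0_compat; lra)) as [delta [Hdelta Hq]].
    exists delta; split; [exact Hdelta|].
    intros s Is Hst Hs Es Et' HEs HEt'; rewrite (sum_Z_unique _ _ _ HEt' HEt).
    replace (dx / 2 * ((Es - Et) / (s - t)) - - (u / 2) * (- (2 * dx / u) * Scd))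
      with (dx / 2 * ((Es - Et) / (s - t) - 2 * Scd)) by (field; lra).
    rewrite Rabs_mult, Rabs_pos_eq by lra.
    replace eps with (dx / 2 * (2 * eps / dx)) by (field; lra).
    apply Rmult_lt_compat_l; [lra|exact (Hq s Is Hst Hs Es HEs)].
  - assert (Hterm : forall j, 0 <= (c t j - c t (j - 1)%Z) ^ 2 * (1 - ph t (j - 1)%Z))
      by (intros j; apply Rmult_le_pos; [apply pow2_ge_0|specialize (Hph (j - 1)%Z); lra]).
    pose proof (sum_Z_nonneg _ _ Hterm HD); nra.
Qed.

Lemma energy_slope_lt t : I t -> forall eps, 0 < eps -> exists delta, 0 < delta /\
  forall s, I s -> s <> t -> Rabs (s - t) < delta ->
    (Zseries (fun j => c s j ^ 2) - Zseries (fun j => c t j ^ 2)) / (s - t) < eps.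
Proof.
  intros It eps Heps; destruct Hc as [Hl2 _].
  destruct (energy_dissipation_rate t It) as [D [_ [Hderiv Hneg]]].
  destruct (Hderiv (dx / 2 * eps) ltac:(nra)) as [delta [Hdelta Hq]].
  exists delta; split; [exact Hdelta|]; intros s Is Hst Hs.
  destruct (Hl2 s Is) as [[Es HEs] _], (Hl2 t It) as [[Et HEt] _].
  pose proof (Hq s Is Hst Hs _ _ HEs HEt) as Hq'.
  rewrite <- (sum_Z_Zseries _ _ HEs), <- (sum_Z_Zseries _ _ HEt).
  apply Rabs_def2 in Hq'; destruct Hq' as [Hq' _].
  apply (Rmult_lt_reg_l (dx / 2)); lra.
Qed.

End Limited_scheme.

Theorem mainTheorem2
  (u dx : R) (phi : R -> R) (I : R -> Prop)
  (c dc : R -> Z -> R) (ph : R -> Z -> R)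
  (Hu : 0 < u) (Hdx : 0 < dx)
  (Hphi : forall r, 0 <= phi r <= 1)
  (HI : is_interval I)
  (Hc : C1_l2_on I c dc)
  (Hlim : forall t, I t -> limiter_values phi (c t) (ph t))
  (Hode : forall t, I t -> forall j : Z,
      dc t j + u * (c_half (c t) (ph t) j - c_half (c t) (ph t) (j - 1)%Z) / dx = 0) :
  (forall t, I t ->
     exists D : R,
       sum_Z (fun j => (c t j - c t (j - 1)%Z) ^ 2 * (1 - ph t (j - 1)%Z)) D /\
       (forall eps, 0 < eps -> exists delta, 0 < delta /\
          forall s, I s -> s <> t -> Rabs (s - t) < delta ->
          forall Es Et,
            sum_Z (fun j => (c s j) ^ 2) Es ->
            sum_Z (fun j => (c t j) ^ 2) Et ->
            Rabs (dx / 2 * ((Es - Et) / (s - t)) - (- (u / 2) * D)) < eps) /\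
       - (u / 2) * D <= 0) /\
  (forall s t, I s -> I t -> s <= t ->
     forall Es Et,
       sum_Z (fun j => (c s j) ^ 2) Es ->
       sum_Z (fun j => (c t j) ^ 2) Et ->
       Et <= Es).
Proof.
  split; [exact (energy_dissipation_rate u dx phi I c dc ph Hu Hdx Hphi Hc Hlim Hode)|].
  intros s t Is It Hst Es Et HEs HEt.
  rewrite (sum_Z_Zseries _ _ HEs), (sum_Z_Zseries _ _ HEt).
  exact (nonincreasing_on_interval I (fun t => Zseries (fun j => c t j ^ 2)) HI
    (energy_slope_lt u dx phi I c dc ph Hu Hdx Hphi Hc Hlim Hode) s t Is It Hst).
Qed.
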